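(* Let $k=\mathbb{F}_3$, let $O_7(k)$ be the group of $7\times7$ matrices over $k$ orthogonal for the bilinear form $\langle x,y\rangle=x_1y_7+x_2y_6+\dots+x_7y_1$ on $k^7$, and let \[ A=\begin{pmatrix} 0&0&1&0&0&1&0\\ 1&0&0&0&0&0&1\\ 0&1&0&0&0&0&0\\ 0&0&0&0&0&0&0\\ 0&1&0&0&0&0&1\\ 0&0&1&0&1&0&0\\ 0&0&0&0&0&1&0 \end{pmatrix}. \] Then there is no $g\in O_7(k)$ such that $M=g^{-1}Ag$ satisfies $M_{ij}=0$ for all $i\in\{5,6,7\}$ and $j\in\{1,2,3\}$.
   Context: $M_{ij}$ denotes the entry in row $i$ and column $j$. *)

From mathcomp Require Import all_boot all_algebra.
Set Implicit Arguments. Unset Strict Implicit. Unset Printing Implicit Defensive.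
Import GRing.Theory.
Local Open Scope ring_scope.

Notation k := 'F_3.

(* Gram matrix of <x,y> = x_1 y_7 + x_2 y_6 + ... + x_7 y_1 (0-based: i + j = 6) *)
Definition Jform : 'M[k]_7 := \matrix_(i < 7, j < 7) ((i + j == 6)%N)%:R.

Definition orthogonal7 (g : 'M[k]_7) : Prop := g^T *m Jform *m g = Jform.

Definition Arows : seq (seq nat) :=
  [:: [:: 0; 0; 1; 0; 0; 1; 0];
      [:: 1; 0; 0; 0; 0; 0; 1];
      [:: 0; 1; 0; 0; 0; 0; 0];
      [:: 0; 0; 0; 0; 0; 0; 0];
      [:: 0; 1; 0; 0; 0; 0; 1];
      [:: 0; 0; 1; 0; 1; 0; 0];
      [:: 0; 0; 0; 0; 0; 1; 0]]%N.

Definition Amat : 'M[k]_7 :=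
  \matrix_(i < 7, j < 7) (nth 0%N (nth [::] Arows i) j)%:R.

(* Since J^2 = 1, an isometry g of J satisfies g^-1 = J g^T J, so
   g^-1 A g = J (g^T (J A) g), and multiplying by J on the left reverses rows.
   The lower-left 3x3 block of g^-1 A g thus vanishes iff the upper-left one of
   g^T (J A) g does; as that of g^T J g = J vanishes too, the first three
   columns of g would span a 3-dimensional subspace of k^7 totally isotropic
   for both forms J and J A.  An exhaustive search over k^7 excludes this: if
   s, t are isotropic, orthogonal to each other for both forms and not
   collinear, then every u with the same properties relative to s and t lies
   in span(s, t). *)
From mathcomp Require Import all_boot all_algebra zify.
Set Implicit Arguments. Unset Strict Implicit. Unset Printing Implicit Defensive.
Import GRing.Theory.
Local Open Scope ring_scope.

Section Isometry.
Variables (R : comUnitRingType) (n : nat) (J : 'M[R]_n).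
Hypothesis JK : J *m J = 1%:M.

Lemma isometry_left_inv g : g^T *m J *m g = J -> J *m g^T *m J *m g = 1%:M.
Proof. by move=> gJ; rewrite -!mulmxA (mulmxA g^T) gJ. Qed.

Lemma isometry_unitmx g : g^T *m J *m g = J -> g \in unitmx.
Proof. by move/isometry_left_inv/mulmx1_unit => []. Qed.

Lemma isometry_invmx g : g^T *m J *m g = J -> invmx g = J *m g^T *m J.
Proof.
move=> gJ; rewrite -[LHS]mul1mx -(isometry_left_inv gJ) -(mulmxA _ g).
by rewrite mulmxV ?mulmx1 // isometry_unitmx.
Qed.

End Isometry.

Lemma ulsubmx_trmx_mul (R : pzSemiRingType) m n1 n2 (X : 'M[R]_(m, n1 + n2))
    (M : 'M_m) :
  ulsubmx (X^T *m M *m X) = (lsubmx X)^T *m M *m lsubmx X.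
Proof.
by rewrite -{1 2}[X]hsubmxK tr_row_mx mul_col_mx mul_col_row block_mxKul.
Qed.

Lemma trmx_mul_colE (R : pzSemiRingType) m n (X : 'M[R]_(m, n)) (M : 'M_m) a b :
  ((col a X)^T *m M *m col b X) 0 0 = (X^T *m M *m X) a b.
Proof.
rewrite !mxE; apply: eq_bigr => i _; rewrite !mxE; congr (_ * _).
by apply: eq_bigr => j _; rewrite !mxE.
Qed.

Lemma col3_relation_ker (R : comPzRingType) m (X : 'M[R]_(m, 3))
    (c0 c1 c2 : R) :
  ~~ [&& c0 == 0, c1 == 0 & c2 == 0] ->
  c0 *: col 0 X + c1 *: col 1 X + c2 *: col 2 X = 0 ->
  exists2 w : 'cV_3, w != 0 & X *m w = 0.
Proof.
move=> c_neq0 Xc0; exists (\col_i [:: c0; c1; c2]`_i).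
  apply: contra c_neq0 => /eqP/matrixP w0.
  have := w0 0 0; have := w0 1 0; have := w0 2 0.
  by rewrite !mxE /= => -> -> ->; rewrite eqxx.
rewrite -Xc0; apply/matrixP => i j.
rewrite !mxE !big_ord_recl big_ord0 addr0 !mxE /=
  addrA ![X i _ * _]mulrC.
by congr (_ * X i _ + _ * X i _ + _ * X i _); apply: val_inj.
Qed.

Lemma Jform_mulmxE m (N : 'M[k]_(7, m)) i j : (Jform *m N) i j = N (rev_ord i) j.
Proof.
have ltis := ltn_ord i.
rewrite mxE (bigD1 (rev_ord i)) //= big1 => [|l ril]; rewrite mxE.
  by rewrite (_ : (i + rev_ord i == 6)%N) ?mul1r ?addr0 //=; lia.
rewrite (_ : (i + l == 6)%N = false) ?mul0r //; apply: contraNF ril => /eqP il.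
by apply/eqP/val_inj => /=; lia.
Qed.

Lemma JformK : Jform *m Jform = 1%:M.
Proof.
apply/matrixP => -[i lti] -[j ltj]; rewrite Jform_mulmxE !mxE -val_eqE /=.
by congr (nat_of_bool _)%:R; apply/idP/idP => /eqP ij; apply/eqP; lia.
Qed.

Lemma Jform_ulsubmx : ulsubmx (Jform : 'M_(3 + 4)) = 0.
Proof.
by apply/matrixP => -[i lti] -[j ltj]; rewrite !mxE /= ltn_eqF //; lia.
Qed.

Lemma ulsubmx_conj_Amat (g : 'M[k]_7) : orthogonal7 g ->
  (forall i j : 'I_7, (4 <= i)%N -> (j < 3)%N ->
     (invmx g *m Amat *m g) i j = 0) ->
  ulsubmx (g^T *m (Jform *m Amat) *m g : 'M_(3 + 4)) = 0.
Proof.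
move=> gO gM.
have -> : g^T *m (Jform *m Amat) *m g = Jform *m (invmx g *m Amat *m g).
  by rewrite (isometry_invmx JformK gO) !mulmxA JformK mul1mx.
apply/matrixP => -[i lti] -[j ltj].
by rewrite mxE [usubmx _ _ _]mxE Jform_mulmxE gM ?mxE //=; lia.
Qed.

Section ExhaustiveSearch.
Local Open Scope nat_scope.

(* A vector of k^7 is coded by the list of its coordinates in {0, 1, 2}. *)
Fixpoint vectors n : seq (seq nat) :=
  if n is n'.+1 then [seq x :: s | x <- iota 0 3, s <- vectors n'] else [:: [::]].

Lemma vectors_complete s : all (fun x => x < 3) s -> s \in vectors (size s).
Proof.
elim: s => [|x s IHs] // /andP[ltx3 /IHs s_in].
by apply: (allpairs_f (fun x s => x :: s)); rewrite // mem_iota.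
Qed.

Definition dotn (s t : seq nat) : nat :=
  sumn [seq nth 0 s i * nth 0 t i | i <- iota 0 7].

Definition revn (s : seq nat) : seq nat := [seq nth 0 s (6 - i) | i <- iota 0 7].

Definition Amuln (s : seq nat) : seq nat := [seq dotn r s | r <- Arows].

Definition dual (t : seq nat) : seq nat * seq nat := (revn t, revn (Amuln t)).

Definition orthn_dual (s : seq nat) (d : seq nat * seq nat) : bool :=
  (3 %| dotn s d.1) && (3 %| dotn s d.2).

Definition orthn (s t : seq nat) : bool := orthn_dual s (dual t).

Definition combn (a b : nat) (s t : seq nat) : seq nat :=
  [seq (a * nth 0 s i + b * nth 0 t i) %% 3 | i <- iota 0 7].

Definition spann (s t : seq nat) : seq (seq nat) :=
  [seq combn a b s t | a <- iota 0 3, b <- iota 0 3].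

(* Pairing each vector with its dual once and for all keeps the search fast. *)
Definition isotropic_duals : seq (seq nat * (seq nat * seq nat)) :=
  [seq (s, dual s) | s <- vectors 7 & orthn s s].

Definition isotropic_triples_dependentb : bool :=
  all (fun sd => let s := sd.1 in
    let N := [seq td <- isotropic_duals | orthn_dual s td.2] in
    all (fun td => let t := td.1 in let P := spann s t in
      [|| t \in spann s s, s \in spann t t |
          all (fun ud => orthn_dual t ud.2 ==> (ud.1 \in P)) N]) N)
  isotropic_duals.

Lemma isotropic_triple_dependent s t u :
  s \in vectors 7 -> t \in vectors 7 -> u \in vectors 7 ->
  orthn s s -> orthn t t -> orthn u u -> orthn s t -> orthn s u -> orthn t u ->
  [|| t \in spann s s, s \in spann t t | u \in spann s t].
Proof.
move=> sV tV uV ss tt uu st su tu.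
have iso x : x \in vectors 7 -> orthn x x -> (x, dual x) \in isotropic_duals.
  by move=> xV xx; apply: map_f; rewrite mem_filter xx.
have /allP/(_ _ (iso s sV ss)) : isotropic_triples_dependentb by vm_compute.
move=> /allP/(_ (t, dual t)); rewrite mem_filter iso // andbT => /(_ st).
case/or3P => [->|->|/allP/(_ (u, dual u))] //; rewrite ?orbT //.
by rewrite mem_filter iso // andbT => /(_ su) /implyP/(_ tu) ->; rewrite !orbT.
Qed.

End ExhaustiveSearch.

Definition cvec (s : seq nat) : 'cV[k]_7 := \col_i (nth 0 s i)%:R.

Definition code (x : 'cV[k]_7) : seq nat := [seq val (x i 0) | i <- enum 'I_7].

Lemma natr_F3_eq0 m : (m%:R == 0 :> k) = (3 %| m)%N.
Proof. by rewrite (dvdn_pcharf (pchar_Fp _)). Qed.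

Lemma natr_sumn_iota (R : pzSemiRingType) n (f : nat -> nat) :
  (sumn [seq f i | i <- iota 0 n])%:R = \sum_(i < n) (f i)%:R :> R.
Proof.
by rewrite sumnE big_map natr_sum -{1}(subn0 n) -/(index_iota 0 n) big_mkord.
Qed.

Lemma nth_code x (i : 'I_7) : nth 0 (code x) i = val (x i 0).
Proof. by rewrite (nth_map i) ?size_enum_ord // nth_ord_enum. Qed.

Lemma cvec_code x : cvec (code x) = x.
Proof. by apply/matrixP => i j; rewrite ord1 mxE nth_code natr_Zp. Qed.

Lemma code_vectors x : code x \in vectors 7.
Proof.
have := @vectors_complete (code x); rewrite size_map size_enum_ord; apply.
by apply/allP => _ /mapP[i _ ->]; exact: ltn_ord.
Qed.

Lemma cvec_dotn s t : ((cvec s)^T *m cvec t) 0 0 = (dotn s t)%:R.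
Proof.
by rewrite natr_sumn_iota mxE; apply: eq_bigr => i _; rewrite !mxE natrM.
Qed.

Lemma Jform_cvec s : Jform *m cvec s = cvec (revn s).
Proof.
apply/matrixP => i j; rewrite Jform_mulmxE !mxE (nth_map 0) ?size_iota //.
by rewrite nth_iota // add0n subSS.
Qed.

Lemma Amat_cvec s : Amat *m cvec s = cvec (Amuln s).
Proof.
apply/matrixP => i j; rewrite !mxE (nth_map [::]) // natr_sumn_iota.
by apply: eq_bigr => l _; rewrite !mxE natrM.
Qed.

Lemma orthn_cvec s t : orthn s t =
  (((cvec s)^T *m Jform *m cvec t) 0 0 == 0) &&
  (((cvec s)^T *m (Jform *m Amat) *m cvec t) 0 0 == 0).
Proof. by rewrite -!mulmxA Amat_cvec !Jform_cvec !cvec_dotn !natr_F3_eq0. Qed.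

Lemma combn_cvec a b s t : cvec (combn a b s t) = a%:R *: cvec s + b%:R *: cvec t.
Proof.
apply/matrixP => i j; rewrite !mxE (nth_map 0) ?size_iota // nth_iota // add0n.
by rewrite Fp_nat_mod // natrD !natrM.
Qed.

Lemma spann_cvec u s t : u \in spann s t ->
  exists a b : k, cvec u = a *: cvec s + b *: cvec t.
Proof.
by case/allpairsP => -[a b] [_ _ ->]; exists a%:R, b%:R; rewrite combn_cvec.
Qed.

Lemma isotropic_cols_dependent (X : 'M[k]_(7, 3)) :
  X^T *m Jform *m X = 0 -> X^T *m (Jform *m Amat) *m X = 0 ->
  exists2 w : 'cV_3, w != 0 & X *m w = 0.
Proof.
move=> XJ XS; pose s a := code (col a X).
have orth a b : orthn (s a) (s b).
  by rewrite orthn_cvec /s !cvec_code !trmx_mul_colE XJ XS !mxE eqxx.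
have := isotropic_triple_dependent
  (code_vectors _) (code_vectors _) (code_vectors _)
  (orth 0 0) (orth 1 1) (orth 2 2) (orth 0 1) (orth 0 2) (orth 1 2).
case/or3P => /spann_cvec[a [b]]; rewrite /s !cvec_code => E.
- apply: (col3_relation_ker (c0 := a + b) (c1 := -1) (c2 := 0)).
    by rewrite oppr_eq0 oner_eq0 andbF.
  by rewrite E scale0r addr0 scaleN1r scalerDl subrr.
- apply: (col3_relation_ker (c0 := -1) (c1 := a + b) (c2 := 0)).
    by rewrite oppr_eq0 oner_eq0.
  by rewrite E scale0r addr0 scaleN1r scalerDl addNr.
- apply: (col3_relation_ker (c0 := a) (c1 := b) (c2 := -1)).
    by rewrite oppr_eq0 oner_eq0 !andbF.
  by rewrite E scaleN1r subrr.
Qed.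

(* Indices are 0-based: rows {5,6,7} -> {4,5,6}, columns {1,2,3} -> {0,1,2}. *)
Theorem lemma2p6 :
  ~ exists g : 'M['F_3]_7,
      orthogonal7 g /\
      (forall (i j : 'I_7), (4 <= i)%N -> (j < 3)%N ->
         (invmx g *m Amat *m g) i j = 0).
Proof.
move=> [g [gO gM]].
have gU : g \in unitmx := isometry_unitmx JformK gO.
have [w w_neq0 gw0] :
    exists2 w : 'cV_3, w != 0 & lsubmx (g : 'M_(7, 3 + 4)) *m w = 0.
  apply: isotropic_cols_dependent; rewrite -ulsubmx_trmx_mul.
    by rewrite gO Jform_ulsubmx.
  exact: ulsubmx_conj_Amat.
have : (g : 'M_(7, 3 + 4)) *m col_mx w 0 = 0.
  by rewrite -(@hsubmxK _ 7 3 4 g) mul_row_col gw0 mulmx0 addr0.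
move/(congr1 (mulmx (invmx g))); rewrite mulKmx // mulmx0 => /eqP.
by rewrite (@col_mx_eq0 _ 3 4) (negbTE w_neq0).
Qed.
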